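(* Let $\mathcal H$ be a complex separable Hilbert space and let $T \in \mathcal B(\mathcal H)$ with polar decomposition $T = V|T|$. Then $$\|T - V\| = \min\{\|T - X\| : X \in \mathcal I,\ \ker(X) = \ker(T)\}.$$
   Context: $\mathcal B(\mathcal H)$ is the algebra of bounded linear operators on $\mathcal H$, and $\|\cdot\|$ is the operator norm. $\mathcal I$ denotes the set of all partial isometries on $\mathcal H$, i.e. $X \in \mathcal B(\mathcal H)$ with $XX^*X = X$. $|T| = (T^*T)^{1/2}$. The polar factor of $T$ is the unique $V \in \mathcal I$ with $T = V|T|$ and $\ker V = \ker T$. *)

From HB Require Import structures.
From mathcomp Require Import all_boot all_order all_algebra.
From mathcomp Require Import complex.
From mathcomp Require Import boolp classical_sets reals.
Set Implicit Arguments. Unset Strict Implicit. Unset Printing Implicit Defensive.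
Import Order.TTheory GRing.Theory Num.Theory.
Local Open Scope ring_scope.
Local Open Scope classical_set_scope.

Section Hilbert.
Variables (R : realType) (H : lmodType R[i]) (ip : H -> H -> R[i]).

Definition hnorm (x : H) : R := Num.sqrt (complex.Re (ip x x)).

Definition is_inner_product : Prop :=
  [/\ forall (a : R[i]) (x y z : H), ip (a *: x + y) z = a * ip x z + ip y z,
      forall x y : H, ip y x = (ip x y)^*,
      forall x : H, 0 <= ip x x &
      forall x : H, ip x x = 0 -> x = 0].

Definition hcauchy (u : nat -> H) : Prop :=
  forall e : R, 0 < e -> exists N : nat, forall m n : nat,
    (N <= m)%N -> (N <= n)%N -> hnorm (u m - u n) < e.

Definition hconverges_to (u : nat -> H) (l : H) : Prop :=
  forall e : R, 0 < e -> exists N : nat, forall n : nat, (N <= n)%N -> hnorm (u n - l) < e.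

Definition hcomplete : Prop :=
  forall u : nat -> H, hcauchy u -> exists l : H, hconverges_to u l.

Definition hseparable : Prop :=
  exists d : nat -> H, forall (x : H) (e : R), 0 < e -> exists n : nat, hnorm (x - d n) < e.

Definition is_separable_hilbert : Prop :=
  [/\ is_inner_product, hcomplete & hseparable].

Definition bounded_op (T : H -> H) : Prop :=
  (forall (a : R[i]) (x y : H), T (a *: x + y) = a *: T x + T y) /\
  exists M : R, forall x : H, hnorm (T x) <= M * hnorm x.

Definition opnorm (T : H -> H) : R :=
  sup [set hnorm (T x) | x in [set x : H | hnorm x <= 1]].

Definition is_adjoint (T Ts : H -> H) : Prop :=
  forall x y : H, ip (T x) y = ip x (Ts y).

Definition partial_isometry (X : H -> H) : Prop :=
  bounded_op X /\ exists Xs : H -> H,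
    bounded_op Xs /\ is_adjoint X Xs /\ forall x : H, X (Xs (X x)) = X x.

Definition same_kernel (X T : H -> H) : Prop :=
  forall x : H, X x = 0 <-> T x = 0.

Definition is_abs_op (T S : H -> H) : Prop :=
  bounded_op S /\ (forall x : H, 0 <= ip (S x) x) /\
  exists Ts : H -> H, bounded_op Ts /\ is_adjoint T Ts /\
    forall x : H, S (S x) = Ts (T x).

Definition polar_factor (T V : H -> H) : Prop :=
  partial_isometry V /\
  (exists S : H -> H, is_abs_op T S /\ forall x : H, T x = V (S x)) /\
  same_kernel V T.

End Hilbert.

From HB Require Import structures.
From mathcomp Require Import all_boot all_order all_algebra.
From mathcomp Require Import complex.
From mathcomp Require Import boolp classical_sets reals.
From mathcomp Require Import ring lra.
Import Order.TTheory GRing.Theory Num.Theory.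
Set Implicit Arguments. Unset Strict Implicit. Unset Printing Implicit Defensive.
Local Open Scope ring_scope.
Local Open Scope classical_set_scope.

(* Let T = V S be the polar decomposition (S = |T|), let X be a partial
   isometry with ker X = ker T, put N = ||T - X|| and M = (ker T)^⊥.
   1. X is isometric on M, and ||Ty|| = ||Sy||; hence for y in M the triangle
      inequality gives (1 - N) ||y|| <= ||Sy|| <= (1 + N) ||y||.
   2. S is positive, hence symmetric, and leaves M invariant.  The norm bounds
      become bounds on the quadratic form <Sy, y>: the upper one by
      Cauchy-Schwarz, the lower one (1 - N) ||y||^2 <= <Sy, y> by an
      approximate-eigenvector argument at the bottom of the numerical range
      of S on M (a hand-made substitute for spectral theory).
   3. A symmetric operator whose quadratic form is bounded by N on an
      invariant subspace has norm at most N there; applied to S - 1 this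
      yields ||Sy - y|| <= N ||y|| for y in M.
   4. For ||x|| <= 1 the vector p = V^*Vx lies in M, ||p|| <= 1 and x - p lies
      in ker T = ker S = ker V, so Tx - Vx = V(Sp - p) and ||Tx - Vx|| <= N. *)

Local Notation Re := complex.Re.
Local Notation Im := complex.Im.

Section ComplexParts.
Variable R : realType.
Implicit Types x y : R[i].
Local Notation cr s := ((s%:C)%C : R[i]).

Lemma ReD x y : Re (x + y) = Re x + Re y. Proof. by case: x; case: y. Qed.
Lemma ImD x y : Im (x + y) = Im x + Im y. Proof. by case: x; case: y. Qed.
Lemma ReN x : Re (- x) = - Re x. Proof. by case: x. Qed.
Lemma ImN x : Im (- x) = - Im x. Proof. by case: x. Qed.
Lemma ReB x y : Re (x - y) = Re x - Re y. Proof. by rewrite ReD ReN. Qed.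
Lemma ReJ x : Re (x^*) = Re x. Proof. by case: x. Qed.
Lemma ImJ x : Im (x^*) = - Im x. Proof. by case: x. Qed.

Lemma Re_realM (s : R) x : Re (cr s * x) = s * Re x.
Proof. by case: x => a b /=; rewrite mul0r subr0. Qed.

Lemma Im_iM x : Im ('i%C * x) = Re x.
Proof. by case: x => a b /=; rewrite mul0r mul1r add0r. Qed.

Lemma conj_i : ('i%C : R[i])^* = - 'i%C.
Proof. by apply/eqP; rewrite eq_complex /= oppr0 !eqxx. Qed.

Lemma conj_real (s : R) : (cr s)^* = cr s.
Proof. by apply/eqP; rewrite eq_complex /= oppr0 !eqxx. Qed.

Lemma i_mul_conj_i : ('i%C : R[i]) * ('i%C)^* = 1.
Proof. by apply/eqP; rewrite eq_complex /=; apply/andP; split; apply/eqP; lra. Qed.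

Lemma complex_ext x y : Re x = Re y -> Im x = Im y -> x = y.
Proof. by case: x; case: y => ? ? ? ? /= -> ->. Qed.

Lemma ge0_real x : 0 <= x -> x = cr (Re x).
Proof. by move=> x0; apply: complex_ext => //=; move: x0; rewrite lecE => /andP[/eqP ->]. Qed.

Lemma ge0_Re x : 0 <= x -> 0 <= Re x.
Proof. by rewrite lecE => /andP[]. Qed.
End ComplexParts.

Lemma quadratic_discriminant (R : realType) (a b d : R) : 0 <= a -> 0 <= d ->
  (forall s, 0 <= a - 2 * s * b + s ^+ 2 * d) -> b ^+ 2 <= a * d.
Proof.
move=> a0 d0 hs.
have [d_eq0|d_neq0] := eqVneq d 0.
  have [b_eq0|b_neq0] := eqVneq b 0; first by rewrite b_eq0 d_eq0; lra.
  have := hs ((a + 1) / (2 * b)); rewrite d_eq0.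
  have -> : 2 * ((a + 1) / (2 * b)) * b = a + 1 by field; rewrite b_neq0.
  lra.
have d_gt0 : 0 < d by rewrite lt_neqAle eq_sym d_neq0 d0.
have := hs (b / d).
have -> : a - 2 * (b / d) * b + (b / d) ^+ 2 * d = (a * d - b ^+ 2) / d.
  by field; rewrite d_neq0.
rewrite pmulr_lge0 ?invr_gt0 //; lra.
Qed.

Lemma le_of_sqr_le (R : realType) (b c : R) : 0 <= b -> 0 <= c -> b ^+ 2 <= c * b -> b <= c.
Proof. by move=> b0 c0 h; rewrite leNgt; apply/negP => cb; nra. Qed.

Section InnerProduct.
Variables (R : realType) (H : lmodType R[i]) (ip : H -> H -> R[i]).
Hypothesis hip : is_inner_product ip.
Implicit Types x y z u v w : H.
Local Notation cr s := ((s%:C)%C : R[i]).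
Local Notation nrm x := (hnorm ip x).

Lemma ipAx a x y z : ip (a *: x + y) z = a * ip x z + ip y z.
Proof. by case: hip. Qed.
Lemma ipC x y : ip y x = (ip x y)^*.
Proof. by case: hip. Qed.
Lemma ip_self_ge0 x : 0 <= ip x x.
Proof. by case: hip. Qed.
Lemma ip_self_eq0 x : ip x x = 0 -> x = 0.
Proof. by case: hip => _ _ _; apply. Qed.

Lemma ip0l z : ip 0 z = 0.
Proof.
have := ipAx 1 0 0 z; rewrite scaler0 addr0 mul1r => h.
by apply: (addrI (ip 0 z)); rewrite addr0 -h.
Qed.
Lemma ipDl x y z : ip (x + y) z = ip x z + ip y z.
Proof. by rewrite -[x]scale1r ipAx mul1r scale1r. Qed.
Lemma ipZl a x z : ip (a *: x) z = a * ip x z.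
Proof. by rewrite -[a *: x]addr0 ipAx ip0l addr0. Qed.
Lemma ipNl x z : ip (- x) z = - ip x z.
Proof. by rewrite -scaleN1r ipZl mulN1r. Qed.
Lemma ipBl x y z : ip (x - y) z = ip x z - ip y z.
Proof. by rewrite ipDl ipNl. Qed.
Lemma ipDr x y z : ip z (x + y) = ip z x + ip z y.
Proof. by rewrite ipC ipDl rmorphD (ipC x z) (ipC y z). Qed.
Lemma ipZr a x z : ip z (a *: x) = a^* * ip z x.
Proof. by rewrite ipC ipZl rmorphM (ipC x z). Qed.
Lemma ipNr x z : ip z (- x) = - ip z x.
Proof. by rewrite ipC ipNl rmorphN (ipC x z). Qed.
Lemma ipBr x y z : ip z (x - y) = ip z x - ip z y.
Proof. by rewrite ipDr ipNr. Qed.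

Lemma Re_ipC x y : Re (ip y x) = Re (ip x y).
Proof. by rewrite ipC ReJ. Qed.

Definition sqn x := Re (ip x x).

Lemma sqn_ge0 x : 0 <= sqn x.
Proof. exact/ge0_Re/ip_self_ge0. Qed.
Lemma ip_self x : ip x x = cr (sqn x).
Proof. exact/ge0_real/ip_self_ge0. Qed.
Lemma sqn_eq0 x : sqn x = 0 -> x = 0.
Proof. by move=> h; apply: ip_self_eq0; rewrite ip_self h. Qed.
Lemma sqn0 : sqn 0 = 0.
Proof. by rewrite /sqn ip0l. Qed.

Lemma Re_ip_sub_scale a b c d (s : R) :
  Re (ip (a - cr s *: b) (c - cr s *: d)) =
  Re (ip a c) - s * Re (ip b c) - s * Re (ip a d) + s ^+ 2 * Re (ip b d).
Proof. rewrite !ipBl !ipBr !ipZl !ipZr conj_real !ReB !Re_realM; ring. Qed.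

Lemma sqnD u v : sqn (u + v) = sqn u + 2 * Re (ip u v) + sqn v.
Proof. rewrite /sqn !ipDl !ipDr !ReD (Re_ipC u v); ring. Qed.

Lemma sqnZ (s : R) x : sqn (cr s *: x) = s ^+ 2 * sqn x.
Proof. rewrite /sqn ipZl ipZr conj_real !Re_realM; ring. Qed.

(* Cauchy-Schwarz, from the discriminant of s |-> ||u - s v||^2. *)
Lemma cauchy_schwarz_sq u v : Re (ip u v) ^+ 2 <= sqn u * sqn v.
Proof.
apply: quadratic_discriminant; [exact: sqn_ge0 | exact: sqn_ge0 |] => s.
have := sqn_ge0 (u - cr s *: v); rewrite /sqn Re_ip_sub_scale (Re_ipC v u).
by congr (0 <= _); ring.
Qed.

Lemma hnorm_ge0 x : 0 <= nrm x.
Proof. exact: sqrtr_ge0. Qed.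
Lemma hnorm_sq x : nrm x ^+ 2 = sqn x.
Proof. by rewrite sqr_sqrtr // sqn_ge0. Qed.
Lemma hnorm0 : nrm 0 = 0.
Proof. by rewrite /hnorm -/(sqn 0) sqn0 sqrtr0. Qed.
Lemma hnorm_eq0 x : nrm x = 0 -> x = 0.
Proof. by move=> h; apply: sqn_eq0; rewrite -hnorm_sq h expr0n. Qed.
Lemma hnormN x : nrm (- x) = nrm x.
Proof. by rewrite /hnorm ipNl ipNr opprK. Qed.
Lemma hnormZ (s : R) x : nrm (cr s *: x) = `|s| * nrm x.
Proof. by rewrite /hnorm -!/(sqn _) sqnZ sqrtrM ?sqr_ge0 // sqrtr_sqr. Qed.

Lemma hnorm_sqn_eq x y : sqn x = sqn y -> nrm x = nrm y.
Proof. by rewrite /hnorm -!/(sqn _) => ->. Qed.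

Lemma hnorm_unit z : sqn z = 1 -> nrm z = 1.
Proof. by move=> h; rewrite /hnorm -/(sqn z) h sqrtr1. Qed.

Lemma exists_unit_multiple y : sqn y != 0 -> exists s : R, sqn (cr s *: y) = 1.
Proof.
move=> y_neq0; exists (nrm y)^-1.
have ny : nrm y != 0 by apply: contraNneq y_neq0 => h; rewrite -hnorm_sq h expr0n.
by rewrite sqnZ -hnorm_sq -exprMn mulVf // expr1n.
Qed.

Lemma hnorm_le x (c : R) : 0 <= c -> sqn x <= c ^+ 2 -> nrm x <= c.
Proof.
by move=> c0 h; rewrite -(ger0_norm c0) -sqrtr_sqr; apply: ler_wsqrtr.
Qed.

Lemma sqn_le_hnorm x (c : R) : 0 <= c -> nrm x <= c -> sqn x <= c ^+ 2.
Proof. by move=> c0 h; rewrite -hnorm_sq; have := hnorm_ge0 x; nra. Qed.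

Lemma cauchy_schwarz u v : Re (ip u v) <= nrm u * nrm v.
Proof.
rewrite /hnorm -sqrtrM ?sqn_ge0 //; apply: (le_trans (ler_norm _)).
by rewrite -sqrtr_sqr; apply: ler_wsqrtr; exact: cauchy_schwarz_sq.
Qed.

Lemma hnormD u v : nrm (u + v) <= nrm u + nrm v.
Proof.
apply: hnorm_le; first by rewrite addr_ge0 ?hnorm_ge0.
rewrite sqnD -!hnorm_sq; have := cauchy_schwarz u v; lra.
Qed.

Lemma hnormB u v : nrm (u - v) <= nrm u + nrm v.
Proof. by rewrite -(hnormN v) hnormD. Qed.

Definition linear_op (A : H -> H) := forall a x y, A (a *: x + y) = a *: A x + A y.

Section LinearOp.
Variable A : H -> H.
Hypothesis lA : linear_op A.

Lemma lin0 : A 0 = 0.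
Proof.
have := lA 1 0 0; rewrite scaler0 addr0 scale1r => h.
by apply: (addrI (A 0)); rewrite addr0 -h.
Qed.
Lemma linD x y : A (x + y) = A x + A y.
Proof. by have := lA 1 x y; rewrite !scale1r. Qed.
Lemma linZ a x : A (a *: x) = a *: A x.
Proof. by have := lA a x 0; rewrite !addr0 lin0 addr0. Qed.
Lemma linB x y : A (x - y) = A x - A y.
Proof. by rewrite linD -scaleN1r linZ scaleN1r. Qed.
End LinearOp.

Lemma linear_sub (A B : H -> H) :
  linear_op A -> linear_op B -> linear_op (fun x => A x - B x).
Proof.
move=> lA lB a x y; rewrite lA lB scalerBr.
by rewrite addrACA opprD.
Qed.

Definition symmetric_op (A : H -> H) := forall x y, ip (A x) y = ip x (A y).
Definition qform (A : H -> H) y := Re (ip (A y) y).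

(* Over the complex field, positivity of <Ax, x> forces symmetry (polarization). *)
Lemma positive_symmetric (A : H -> H) :
  linear_op A -> (forall x, 0 <= ip (A x) x) -> symmetric_op A.
Proof.
move=> lA A_pos x y; rewrite (ipC (A y) x).
have ImA u : Im (ip (A u) u) = 0 by rewrite (ge0_real (A_pos u)).
set a := ip (A x) y; set b := ip (A y) x.
have Im_sum := ImA (x + y).
rewrite (linD lA) !ipDl !ipDr !ImD !ImA add0r addr0 -/a -/b in Im_sum.
have Im_isum := ImA (x + 'i%C *: y).
rewrite (linD lA) (linZ lA) !ipDl !ipDr !ipZl !ipZr !ImD !ImA -/a -/b in Im_isum.
rewrite mulrA i_mul_conj_i mul1r ImA conj_i mulNr ImN !Im_iM in Im_isum.
by apply: complex_ext; rewrite ?ReJ ?ImJ; lra.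
Qed.

Definition shift_op (A : H -> H) (b : R) x := A x - cr b *: x.

Lemma linear_shift A b : linear_op A -> linear_op (shift_op A b).
Proof.
move=> lA a x y; rewrite /shift_op lA scalerDr !scalerA (mulrC (cr b)).
by rewrite -scalerA scalerBr addrACA opprD.
Qed.

Lemma symmetric_shift A b : symmetric_op A -> symmetric_op (shift_op A b).
Proof. by move=> symA x y; rewrite /shift_op ipBl ipBr ipZl ipZr conj_real symA. Qed.

Lemma qform_shift A b y : qform (shift_op A b) y = qform A y - b * sqn y.
Proof. by rewrite /qform /shift_op ipBl ipZl ReB Re_realM. Qed.

Lemma qformZ A (s : R) y : linear_op A -> qform A (cr s *: y) = s ^+ 2 * qform A y.
Proof. by move=> lA; rewrite /qform (linZ lA) ipZl ipZr conj_real !Re_realM mulrA -expr2. Qed.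

Lemma qform_sub_scale A z w (s : R) : linear_op A -> symmetric_op A ->
  qform A (z - cr s *: w) = qform A z - 2 * s * Re (ip (A z) w) + s ^+ 2 * qform A w.
Proof.
move=> lA symA; rewrite /qform (linB lA) (linZ lA) Re_ip_sub_scale (symA w z) (Re_ipC w (A z)).
ring.
Qed.

Section Subspace.
Variable M : H -> Prop.
Hypotheses (M_sub : forall y y', M y -> M y' -> M (y - y'))
  (M_scale : forall a y, M y -> M (a *: y)).

Section SymmetricOnSubspace.
Variable A : H -> H.
Hypotheses (lA : linear_op A) (symA : symmetric_op A) (M_inv : forall y, M y -> M (A y)).

(* Cauchy-Schwarz for the semi-inner product (u, v) |-> <Au, v> when A >= 0
   on M, applied to the pair z, Az. *)
Lemma psd_cauchy_schwarz z : (forall u, M u -> 0 <= qform A u) -> M z ->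
  sqn (A z) ^+ 2 <= qform A z * qform A (A z).
Proof.
move=> A_psd Mz; apply: quadratic_discriminant; [exact: A_psd | exact/A_psd/M_inv |].
move=> s; have := A_psd (z - cr s *: A z) (M_sub Mz (M_scale _ (M_inv Mz))).
by rewrite qform_sub_scale.
Qed.

Lemma symmetric_norm_bound (N : R) y : 0 <= N ->
  (forall u, M u -> `|qform A u| <= N * sqn u) -> M y ->
  sqn (A y) <= N ^+ 2 * sqn y.
Proof.
move=> N0 A_bound My; set b := sqn (A y).
have M_perturb s : M (y - cr s *: A y) by apply: M_sub (M_scale _ (M_inv My)).
have sqn_expand s : sqn (y - cr s *: A y) = sqn y - 2 * s * Re (ip y (A y)) + s ^+ 2 * b.
  by rewrite /sqn Re_ip_sub_scale (Re_ipC y (A y)); rewrite -/b; ring.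
have quad s : 0 <= N * sqn y - 2 * s * b + s ^+ 2 * (N * b).
  have /ler_normlP[form_lower _] := A_bound _ (M_perturb s).
  have /ler_normlP[_ form_upper] := A_bound _ (M_perturb (- s)).
  rewrite !qform_sub_scale // !sqn_expand sqrrN in form_lower form_upper.
  nra.
have := quadratic_discriminant (mulr_ge0 N0 (sqn_ge0 y)) (mulr_ge0 N0 (sqn_ge0 _)) quad.
rewrite mulrACA -expr2 -/b mulrA => disc.
by apply: le_of_sqr_le => //; rewrite ?sqn_ge0 // mulr_ge0 ?sqr_ge0 ?sqn_ge0.
Qed.
End SymmetricOnSubspace.

Section NumericalRange.
Variable A : H -> H.
Hypotheses (lA : linear_op A) (symA : symmetric_op A)
  (M_inv : forall y, M y -> M (A y)) (A_psd : forall u, M u -> 0 <= qform A u).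

Definition numrange := [set qform A z | z in [set z | M z /\ sqn z = 1]].
Local Notation m := (inf numrange).

Lemma numrange_lbound : lbound numrange 0.
Proof. by move=> _ [z [Mz _] <-]; exact: A_psd. Qed.

Lemma numrange_inf_le y : M y -> m * sqn y <= qform A y.
Proof.
move=> My; have [y0|ny] := eqVneq (sqn y) 0; first by rewrite y0 mulr0 A_psd.
have [s unit_sy] := exists_unit_multiple ny.
have : m <= qform A (cr s *: y).
  apply: (ge_inf (ex_intro _ 0 numrange_lbound)); exists (cr s *: y) => //.
  by split => //; apply: M_scale.
rewrite qformZ // => m_le; move: unit_sy; rewrite sqnZ => unit_sy.
have := sqn_ge0 y; have := A_psd My; nra.
Qed.

(* A unit vector z of M nearly minimizing the form is an approximate
   eigenvector: (A - m) z is small. *)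
Lemma approx_eigenvector (C eps : R) z :
  (forall y, M y -> qform A y <= C * sqn y) -> M z -> sqn z = 1 ->
  qform A z <= m + eps -> sqn (shift_op A m z) <= eps * (C - m).
Proof.
move=> A_upper Mz unit_z z_near; set B := shift_op A m.
have B_psd u : M u -> 0 <= qform B u.
  by move=> Mu; rewrite qform_shift subr_ge0; exact: numrange_inf_le.
have M_invB u : M u -> M (B u) by move=> Mu; apply: M_sub (M_inv Mu) (M_scale _ Mu).
have cs := psd_cauchy_schwarz (linear_shift m lA)
  (symmetric_shift m symA) M_invB B_psd Mz.
have Bz_le : qform B z <= eps by rewrite qform_shift unit_z; lra.
have BBz_le : qform B (B z) <= (C - m) * sqn (B z).
  by rewrite qform_shift; have := A_upper _ (M_invB _ Mz); lra.
have m_le := numrange_inf_le Mz; have C_le := A_upper _ Mz; rewrite unit_z in m_le C_le.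
apply: le_of_sqr_le; rewrite ?sqn_ge0 ?mulr_ge0 //; try lra.
have := B_psd _ Mz; have := B_psd _ (M_invB _ Mz); have := sqn_ge0 (B z); nra.
Qed.

(* If c ||y|| <= ||Ay|| on M (and the form is bounded above), then
   c ||y||^2 <= <Ay, y> on M: otherwise m < c, and an approximate
   eigenvector z at m would give c - m <= ||(A - m) z|| <= small. *)
Lemma numerical_range_lower (c C : R) :
  (forall y, M y -> c * nrm y <= nrm (A y)) ->
  (forall y, M y -> qform A y <= C * sqn y) ->
  forall y, M y -> c * sqn y <= qform A y.
Proof.
move=> A_lower A_upper y My.
have [c_le0|c_gt0] := leP c 0; first by have := A_psd My; have := sqn_ge0 y; nra.
have [y0|ny] := eqVneq (sqn y) 0; first by rewrite y0 mulr0 A_psd.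
suff c_le_m : c <= m.
  by have := numrange_inf_le My; have := sqn_ge0 y; nra.
have [s unit_z0] := exists_unit_multiple ny.
have Mz0 : M (cr s *: y) by apply: M_scale.
have hinf : has_inf numrange.
  by split; [exists (qform A (cr s *: y)); exists (cr s *: y) | exists 0; exact: numrange_lbound].
have m_ge0 : 0 <= m by apply: lb_le_inf; [case: hinf | exact: numrange_lbound].
have m_le_C : m <= C.
  by have := numrange_inf_le Mz0; have := A_upper _ Mz0; rewrite unit_z0; lra.
rewrite leNgt; apply/negP => m_lt_c.
set d := c - m; set eps := d ^+ 2 / (C - m + 1).
have eps_gt0 : 0 < eps by rewrite divr_gt0 ?exprn_gt0 /d; lra.
have eps_def : eps * (C - m + 1) = d ^+ 2 by rewrite mulrVK // unitfE; apply/eqP; lra.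
have [_ [z [Mz unit_z] <-] z_near] := inf_adherent eps_gt0 hinf.
have small := approx_eigenvector A_upper Mz unit_z (ltW z_near).
have big : d <= nrm (shift_op A m z).
  have Az_ge : c <= nrm (A z) by have := A_lower _ Mz; rewrite (hnorm_unit unit_z) mulr1.
  have : nrm (A z) <= nrm (shift_op A m z) + m.
    have -> : A z = shift_op A m z + cr m *: z by rewrite /shift_op subrK.
    apply: (le_trans (hnormD _ _)).
    by rewrite hnormZ (hnorm_unit unit_z) mulr1 ger0_norm.
  rewrite /d; lra.
have d_gt0 : 0 < d by rewrite /d; lra.
have : d ^+ 2 <= sqn (shift_op A m z).
  by rewrite -hnorm_sq; have := hnorm_ge0 (shift_op A m z); nra.
lra.
Qed.
End NumericalRange.
End Subspace.

Definition orth_ker (T : H -> H) y := forall k, T k = 0 -> ip k y = 0.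

Lemma orth_ker_sub T y y' : orth_ker T y -> orth_ker T y' -> orth_ker T (y - y').
Proof. by move=> hy hy' k Tk; rewrite ipBr hy // hy' // subr0. Qed.

Lemma orth_ker_scale T a y : orth_ker T y -> orth_ker T (a *: y).
Proof. by move=> hy k Tk; rewrite ipZr hy // mulr0. Qed.

Lemma orth_ker_ipr T y k : orth_ker T y -> T k = 0 -> ip y k = 0.
Proof. by move=> hy Tk; rewrite ipC hy // conjC0. Qed.

Section PartialIsometry.
Variables (T W Ws : H -> H).
Hypotheses (lW : linear_op W) (adjW : is_adjoint ip W Ws)
  (WWsW : forall x, W (Ws (W x)) = W x) (kW : same_kernel W T).

Lemma pi_range_orth z : orth_ker T (Ws (W z)).
Proof. by move=> k Tk; rewrite -adjW; have /kW -> := Tk; rewrite ip0l. Qed.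

Lemma pi_ker z : T (z - Ws (W z)) = 0.
Proof. by apply/kW; rewrite (linB lW) WWsW subrr. Qed.

Lemma pi_isometric y : orth_ker T y -> sqn (W y) = sqn y.
Proof.
move=> hy; rewrite /sqn adjW.
have -> : ip y y = ip y (Ws (W y)) + ip y (y - Ws (W y)) by rewrite ipBr addrC subrK.
by rewrite (orth_ker_ipr hy (pi_ker y)) addr0.
Qed.

Lemma pi_proj_contraction w : sqn (Ws (W w)) <= sqn w.
Proof.
have -> : sqn w = sqn (Ws (W w) + (w - Ws (W w))) by rewrite addrC subrK.
rewrite sqnD (orth_ker_ipr (pi_range_orth w) (pi_ker w)).
by have := sqn_ge0 (w - Ws (W w)); lra.
Qed.

Lemma pi_contraction w : sqn (W w) <= sqn w.
Proof. by rewrite -{1}WWsW pi_isometric ?pi_proj_contraction //; exact: pi_range_orth. Qed.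
End PartialIsometry.

Section AbsoluteValue.
Variables (T S Ts : H -> H).
Hypotheses (lS : linear_op S) (S_pos : forall x, 0 <= ip (S x) x)
  (adjT : is_adjoint ip T Ts) (S_sq : forall x, S (S x) = Ts (T x)).

Lemma sqn_abs x : sqn (T x) = sqn (S x).
Proof. by rewrite /sqn adjT -S_sq -(positive_symmetric lS S_pos). Qed.

Lemma abs_ker k : T k = 0 -> S k = 0.
Proof. by move=> Tk; apply: sqn_eq0; rewrite -sqn_abs Tk sqn0. Qed.

Lemma abs_range_orth z : orth_ker T (S z).
Proof.
by move=> k Tk; rewrite -(positive_symmetric lS S_pos) abs_ker // ip0l.
Qed.
End AbsoluteValue.

Definition bounded (D : H -> H) := exists c : R, forall x, nrm (D x) <= c * nrm x.

Lemma bounded_sub (A B : H -> H) :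
  bounded A -> bounded B -> bounded (fun x => A x - B x).
Proof.
move=> [a hA] [b hB]; exists (a + b) => x; apply: (le_trans (hnormB _ _)).
by rewrite mulrDl lerD.
Qed.

Section OperatorNorm.
Variable D : H -> H.
Hypotheses (lD : linear_op D) (bD : bounded D).

Lemma opnorm_ub x : nrm x <= 1 -> nrm (D x) <= opnorm ip D.
Proof.
move=> x1; apply: ub_le_sup; last by exists x.
case: bD => c hc; exists (`|c|) => _ [u /= u1 <-].
apply: (le_trans (hc u)); have := hnorm_ge0 u; have := ler_norm c.
have := normr_ge0 c; nra.
Qed.

Lemma opnorm_ge0 : 0 <= opnorm ip D.
Proof. by have := @opnorm_ub 0; rewrite hnorm0 (lin0 lD) hnorm0; apply; exact: ler01. Qed.

Lemma opnorm_bound y : nrm (D y) <= opnorm ip D * nrm y.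
Proof.
have [y0|ny] := eqVneq (nrm y) 0.
  by rewrite (hnorm_eq0 y0) (lin0 lD) hnorm0 mulr0.
have y_gt0 : 0 < nrm y by rewrite lt_neqAle eq_sym ny hnorm_ge0.
have := @opnorm_ub (cr (nrm y)^-1 *: y).
rewrite (linZ lD) !hnormZ ger0_norm ?invr_ge0 ?hnorm_ge0 // mulVf //.
by move/(_ (lexx _)); rewrite ler_pdivrMl // mulrC.
Qed.
End OperatorNorm.

Lemma opnorm_le (D : H -> H) (c : R) :
  (forall x, nrm x <= 1 -> nrm (D x) <= c) -> opnorm ip D <= c.
Proof.
move=> hc; apply: ge_sup; first by exists (nrm (D 0)); exists 0 => //=; rewrite hnorm0 ler01.
by move=> _ [x x1 <-]; exact: hc.
Qed.

Section PolarDistance.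
Variables (T V X S Ts Vs Xs : H -> H).
Hypotheses (lT : linear_op T) (lX : linear_op X) (lV : linear_op V) (lS : linear_op S)
  (bT : bounded T) (bX : bounded X)
  (adjT : is_adjoint ip T Ts) (adjV : is_adjoint ip V Vs) (adjX : is_adjoint ip X Xs)
  (VVsV : forall x, V (Vs (V x)) = V x) (XXsX : forall x, X (Xs (X x)) = X x)
  (S_pos : forall x, 0 <= ip (S x) x) (S_sq : forall x, S (S x) = Ts (T x))
  (T_polar : forall x, T x = V (S x))
  (kV : same_kernel V T) (kX : same_kernel X T).

Local Notation N := (opnorm ip (fun x => T x - X x)).

Let symS : symmetric_op S := positive_symmetric lS S_pos.
Let S_psd u : orth_ker T u -> 0 <= qform S u := fun _ => ge0_Re (S_pos u).
Let S_inv u : orth_ker T u -> orth_ker T (S u) := fun _ => abs_range_orth lS S_pos adjT S_sq u.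

Lemma distance_bound y : nrm (T y - X y) <= N * nrm y.
Proof. exact: opnorm_bound (linear_sub lT lX) (bounded_sub bT bX) y. Qed.

Lemma distance_ge0 : 0 <= N.
Proof. exact: opnorm_ge0 (linear_sub lT lX) (bounded_sub bT bX). Qed.

(* Step 1: on (ker T)^⊥, ||Sy|| = ||Ty|| is within N ||y|| of ||Xy|| = ||y||. *)
Lemma abs_norm_bounds y : orth_ker T y ->
  (1 - N) * nrm y <= nrm (S y) <= (1 + N) * nrm y.
Proof.
move=> hy; have nX : nrm (X y) = nrm y by apply/hnorm_sqn_eq/(pi_isometric lX adjX XXsX kX).
have nT : nrm (T y) = nrm (S y) by apply/hnorm_sqn_eq/(sqn_abs lS S_pos adjT S_sq).
have := distance_bound y; rewrite -nT.
have := hnormD (T y - X y) (X y); have := hnormB (T y) (T y - X y).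
rewrite subrK opprB addrC subrK nX => lower_tri upper_tri dist.
by apply/andP; split; lra.
Qed.

Lemma abs_form_upper y : orth_ker T y -> qform S y <= (1 + N) * sqn y.
Proof.
move=> hy; apply: (le_trans (cauchy_schwarz _ _)).
have /andP[_ S_upper] := abs_norm_bounds hy.
rewrite -hnorm_sq expr2 mulrA ler_wpM2r ?hnorm_ge0 //.
Qed.

Lemma abs_form_lower y : orth_ker T y -> (1 - N) * sqn y <= qform S y.
Proof.
apply: (numerical_range_lower (@orth_ker_sub T) (@orth_ker_scale T) lS symS S_inv S_psd).
- by move=> u hu; have /andP[] := abs_norm_bounds hu.
- exact: abs_form_upper.
Qed.

Lemma abs_near_identity y : orth_ker T y -> sqn (S y - y) <= N ^+ 2 * sqn y.
Proof.
move=> hy; have := symmetric_norm_bound (@orth_ker_sub T) (@orth_ker_scale T)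
  (linear_shift 1 lS) (symmetric_shift 1 symS) _ distance_ge0 _ hy.
rewrite /shift_op rmorph1 !scale1r; apply.
- by move=> u hu; apply: orth_ker_sub (S_inv hu) (orth_ker_scale _ hu).
- move=> u hu; rewrite qform_shift mul1r ler_norml.
  have := abs_form_upper hu; have := abs_form_lower hu.
  by move=> lower upper; apply/andP; split; lra.
Qed.

(* Step 4: Tx - Vx = V(Sp - p) with p = V^*Vx in (ker T)^⊥, ||p|| <= ||x||. *)
Lemma polar_distance_bound x : nrm x <= 1 -> nrm (T x - V x) <= N.
Proof.
move=> x1; set p := Vs (V x).
have p_orth : orth_ker T p := pi_range_orth adjV kV x.
have T_ker : T (x - p) = 0 := pi_ker lV VVsV kV x.
have V_ker : V (x - p) = 0 by apply/kV.
have S_ker : S (x - p) = 0 := abs_ker lS S_pos adjT S_sq T_ker.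
have -> : T x - V x = V (S p - p).
  have x_split : x = p + (x - p) by rewrite addrC subrK.
  by rewrite T_polar {1 2}x_split (linD lS) S_ker addr0 (linD lV) V_ker addr0 (linB lV).
apply: hnorm_le distance_ge0 _.
apply: (le_trans (pi_contraction lV adjV VVsV kV _)).
apply: (le_trans (abs_near_identity p_orth)).
have := pi_proj_contraction lV adjV VVsV kV x; have := sqn_le_hnorm ler01 x1.
rewrite expr1n -/p; have := sqn_ge0 p; have := distance_ge0; nra.
Qed.
End PolarDistance.
End InnerProduct.

Unset Implicit Arguments.

Theorem corollary2p4 (R : realType) (H : lmodType R[i]) (ip : H -> H -> R[i])
  (hH : is_separable_hilbert ip) (T V : H -> H)
  (hT : bounded_op ip T) (hV : polar_factor ip T V) :
  (partial_isometry ip V /\ same_kernel V T) /\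
  forall X : H -> H, partial_isometry ip X -> same_kernel X T ->
    opnorm ip (fun x => T x - V x) <= opnorm ip (fun x => T x - X x).
Proof.
case: hV => V_pi [[S [S_abs T_polar]] kV].
split=> // X X_pi kX.
case: hH => hip _ _; case: hT => lT bT.
case: (V_pi) => [[lV _] [Vs [_ [adjV VVsV]]]].
case: X_pi => [[lX bX] [Xs [_ [adjX XXsX]]]].
case: S_abs => [[lS _] [S_pos [Ts [_ [adjT S_sq]]]]].
apply: (opnorm_le hip) => x x1.
exact: (polar_distance_bound hip lT lX lV lS bT bX adjT adjV adjX VVsV XXsX
  S_pos S_sq T_polar kV kX x1).
Qed.
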